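(* For all integers $d\ge1$ and $p\ge0$, $$\|\partial_{x_i}v\|_{L^2(Q_d)}\le C_{p,1}\|v\|_{L^2(Q_d)}\qquad\forall v\in\mathbb{P}_p(Q_d),\ \forall i\in\{1,\dots,d\},$$ where $Q_d:=[0,1]^d$ is the unit hypercube and $\mathbb{P}_p(Q_d)$ the polynomials of total degree at most $p$.
   Context: $C_{p,1}$ denotes the best constant in the univariate inverse inequality $\|v'\|_{L^2(0,1)}\le C_{p,1}\|v\|_{L^2(0,1)}$ for all polynomials $v$ of degree at most $p$ on $(0,1)$. *)

From HB Require Import structures.
From mathcomp Require Import all_boot all_order all_algebra.
From mathcomp Require Import all_classical all_reals all_analysis.
Set Implicit Arguments. Unset Strict Implicit. Unset Printing Implicit Defensive.
Import Order.TTheory GRing.Theory Num.Theory.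
Import numFieldNormedType.Exports.
Local Open Scope classical_set_scope.
Local Open Scope ring_scope.

Section Defs.
Variable R : realType.

Definition int01 (f : R -> R) : R :=
  (\int[@lebesgue_measure R]_(t in `[0%R, 1%R]) f t)%R.

Definition L2poly (v : {poly R}) : R := Num.sqrt (int01 (fun t => v.[t] ^+ 2)).

Definition Cp1 (p : nat) : R :=
  inf [set C : R | 0 <= C /\
        forall v : {poly R}, (size v <= p.+1)%N -> L2poly v^`() <= C * L2poly v].

Definition setc (d : nat) (x : 'rV[R]_d) (k : nat) (t : R) : 'rV[R]_d :=
  \row_(j < d) (if (j : nat) == k then t else x ord0 j).

(** Iterated integral over coordinates 0..k-1, each over [0,1]
    (for k = d this is the integral over the unit cube Q_d = [0,1]^d). *)
Fixpoint iint (d : nat) (k : nat) (f : 'rV[R]_d -> R) (x : 'rV[R]_d) : R :=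
  match k with
  | 0 => f x
  | k'.+1 => int01 (fun t => iint k' f (setc x k' t))
  end.

Definition L2cube (d : nat) (f : 'rV[R]_d -> R) : R :=
  Num.sqrt (iint d (fun x => f x ^+ 2) 0).

Definition is_poly_tdeg (d p : nat) (v : 'rV[R]_d -> R) : Prop :=
  exists c : {ffun 'I_d -> 'I_p.+1} -> R,
    forall x : 'rV[R]_d,
      v x = \sum_(a : {ffun 'I_d -> 'I_p.+1} | (\sum_(i < d) (a i : nat) <= p)%N)
              c a * \prod_(i < d) x ord0 i ^+ a i.

Definition partial (d : nat) (i : 'I_d) (v : 'rV[R]_d -> R) : 'rV[R]_d -> R :=
  fun x => derive1 (fun t => v (setc x i t)) (x ord0 i).

End Defs.

From HB Require Import structures.
From mathcomp Require Import all_boot all_order all_algebra.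
From mathcomp Require Import all_classical all_reals all_analysis.
From mathcomp Require Import ring lra.
Import Order.TTheory GRing.Theory Num.Theory numFieldNormedType.Exports.
Local Open Scope classical_set_scope.
Local Open Scope ring_scope.

(** Fix the coordinates other than x_i. Then v restricted to the line in the
    x_i direction is a univariate polynomial Q of degree at most p and d_i v
    restricts to Q', so int_0^1 (C_{p,1}^2 Q^2 - Q'^2) >= 0. Integrating this
    over the remaining coordinates (Fubini, which for polynomials is a
    computation on monomials) gives ||d_i v||^2 <= C_{p,1}^2 ||v||^2.
    That C_{p,1} satisfies the univariate inequality at all requires some
    admissible constant to exist; it comes from the equivalence of norms on
    polynomials of degree at most p, via the invertibility of the Hilbert
    matrix, the Gram matrix of the monomials in L^2(0,1). *)

Set Implicit Arguments. Unset Strict Implicit. Unset Printing Implicit Defensive.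

Section PolyIntegral.
Variable R : realType.
Implicit Types (p q : {poly R}) (a b : R).

Definition prim q : {poly R} := \poly_(k < size q) (q`_k / k.+1%:R) * 'X.

Lemma coef_prim q i : (prim q)`_i = if i is k.+1 then q`_k / k.+1%:R else 0.
Proof.
rewrite coefMX; case: i => [|k] //=; rewrite coef_poly.
by case: ltnP => // /(nth_default 0) ->; rewrite mul0r.
Qed.

Lemma prim_deriv q : (prim q)^`() = q.
Proof.
apply/polyP => i; rewrite coef_deriv coef_prim -[LHS]mulr_natr.
by rewrite divfK ?pnatr_eq0.
Qed.

Definition pint q : R := (prim q).[1].

Fact pint_is_semilinear : semilinear pint.
Proof.
split=> [a p|p q]; rewrite /pint;
  [rewrite -[RHS]/(a * (prim p).[1]) -hornerZ | rewrite -hornerD];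
  congr (_.[_]); apply/polyP => -[|i];
  by rewrite !(coefD, coefZ, coef_prim) ?mulr0 ?addr0 ?mulrDl ?mulrA.
Qed.
HB.instance Definition _ := GRing.isSemilinear.Build R {poly R} R _ pint
  pint_is_semilinear.

Lemma pintXn n : pint 'X^n = n.+1%:R^-1.
Proof.
rewrite /pint.
have -> : prim 'X^n = n.+1%:R^-1%:P * 'X^(n.+1).
  apply/polyP => -[|i]; rewrite coef_prim coefCM !coefXn ?mulr0 // eqSS.
  by have [->|ne] := eqVneq i n; rewrite ?mul1r ?mulr1 ?mul0r ?mulr0.
by rewrite hornerCM hornerXn expr1n mulr1.
Qed.

Lemma pintC a : pint a%:P = a.
Proof. by rewrite -[a%:P]mulr1 mul_polyC -(expr0 'X) linearZ /= pintXn invr1 -[RHS]mulr1. Qed.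

Lemma Rintegral_poly q a b : a < b ->
  (\int[@lebesgue_measure R]_(x in `[a, b]) q.[x])%R = (prim q).[b] - (prim q).[a].
Proof.
move=> ab; rewrite /Rintegral.
rewrite (@continuous_FTC2 _ (horner q) (horner (prim q))) //=.
- apply/continuous_subspaceT => x; exact: continuous_horner.
- split=> [x _| |].
  + exact: derivable_horner.
  + by apply: cvg_at_right_filter; exact: continuous_horner.
  + by apply: cvg_at_left_filter; exact: continuous_horner.
- by move=> x _; rewrite -derivE prim_deriv.
Qed.

Lemma int01_horner q : int01 (horner q) = pint q.
Proof. by rewrite /int01 Rintegral_poly ?ltr01 // horner_coef0 coef_prim subr0. Qed.

Lemma int01_ge0 (f : R -> R) : (forall t, 0 <= t <= 1 -> 0 <= f t) -> 0 <= int01 f.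
Proof. by move=> f_ge0; apply: Rintegral_ge0 => t /=; rewrite in_itv; apply: f_ge0. Qed.

Lemma int01_cst a : int01 (fun=> a) = a.
Proof.
by rewrite -[RHS]pintC -int01_horner; congr int01; apply/funext => t; rewrite hornerC.
Qed.

Lemma int01_sum_pow (T : Type) (r : seq T) (c : T -> R) (n : T -> nat) :
  int01 (fun t => \sum_(m <- r) c m * t ^+ n m) = \sum_(m <- r) c m / (n m).+1%:R.
Proof.
have -> : (fun t => \sum_(m <- r) c m * t ^+ n m) = horner (\sum_(m <- r) c m *: 'X^(n m)).
  by apply/funext => t; rewrite horner_sum; apply: eq_bigr => m _; rewrite hornerZ hornerXn.
by rewrite int01_horner linear_sum; apply: eq_bigr => m _; rewrite linearZ /= pintXn.
Qed.

Lemma pint_sqr_ge0 q : 0 <= pint (q ^+ 2).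
Proof. by rewrite -int01_horner; apply: int01_ge0 => t _; rewrite horner_exp sqr_ge0. Qed.

Lemma L2polyE q : L2poly q = Num.sqrt (pint (q ^+ 2)).
Proof.
rewrite /L2poly -int01_horner; congr (Num.sqrt (int01 _)).
by apply/funext => t; rewrite horner_exp.
Qed.

Lemma poly_eq0_on01 q : (forall x, 0 < x < 1 -> q.[x] = 0) -> q = 0.
Proof.
move=> q0; apply/eqP; apply: contraT => nz_q.
suff : (size q < size q)%N by rewrite ltnn.
rewrite -[X in (X < _)%N](size_iota 0) -(size_map (fun k => k.+2%:R^-1 : R)).
apply: max_poly_roots nz_q _ _.
  apply/allP => _ /mapP[k _ ->]; apply/rootP/q0.
  by rewrite invr_gt0 ltr0Sn invf_lt1 ?ltr0Sn // ltr1n.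
by rewrite map_inj_uniq ?iota_uniq // => m n /invr_inj/eqP; rewrite eqr_nat => /eqP[].
Qed.

Lemma pint_sqr_eq0 q : pint (q ^+ 2) = 0 -> q = 0.
Proof.
move=> q0; set P := prim (q ^+ 2).
have int_ge0 a b : a < b -> 0 <= P.[b] - P.[a].
  move=> ab; rewrite -Rintegral_poly //.
  by apply: Rintegral_ge0 => t _; rewrite horner_exp sqr_ge0.
(* P is nondecreasing on [0, 1] and vanishes at both ends. *)
have P0 : P = 0.
  apply: poly_eq0_on01 => x /andP[x0 x1].
  have := int_ge0 _ _ x0; have := int_ge0 _ _ x1.
  by rewrite [P.[0]]horner_coef0 coef_prim; move: q0; rewrite /pint -/P; lra.
have : q ^+ 2 = 0 by rewrite -(prim_deriv (q ^+ 2)) -/P P0 deriv0.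
by move/eqP; rewrite expf_eq0 => /eqP.
Qed.

Lemma pint_Cauchy_Schwarz f g : pint (f * g) ^+ 2 <= pint (f ^+ 2) * pint (g ^+ 2).
Proof.
have [->|g_neq0] := eqVneq g 0; first by rewrite mulr0 expr0n /= raddf0 expr0n mulr0.
set A := pint (f ^+ 2); set B := pint (f * g); set C := pint (g ^+ 2).
have C_gt0 : 0 < C.
  by rewrite lt_def pint_sqr_ge0 andbT; apply: contraNneq _ g_neq0 => /pint_sqr_eq0 ->.
have := pint_sqr_ge0 (f - (B / C) *: g).
have -> : (f - (B / C) *: g) ^+ 2 = f ^+ 2 - (2 * (B / C)) *: (f * g) + (B / C) ^+ 2 *: g ^+ 2.
  by rewrite -!mul_polyC polyCM rmorphXn; ring.
rewrite linearD linearB !linearZ /= -/A -/B -/C => ge0.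
have := mulr_ge0 ge0 (ltW C_gt0).
have -> : (A + (2 * (B / C)) *: - B + (B / C) ^+ 2 *: C) * C = A * C - B ^+ 2.
  by rewrite /GRing.scale /=; field; rewrite gt_eqF.
by rewrite subr_ge0.
Qed.

Definition hilbert n : 'M[R]_n := \matrix_(k, l) (k + l).+1%:R^-1.

Lemma rVpolyE n (u : 'rV[R]_n) : rVpoly u = \sum_(k < n) u 0 k *: 'X^k.
Proof. by rewrite /rVpoly poly_def; apply: eq_bigr => k _; rewrite valK. Qed.

Lemma pint_rVpolyM n (u v : 'rV[R]_n) :
  pint (rVpoly u * rVpoly v) = (u *m hilbert n *m v^T) 0 0.
Proof.
rewrite !rVpolyE mulr_suml linear_sum mxE; under [RHS]eq_bigr do rewrite !mxE mulr_suml.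
rewrite exchange_big; apply: eq_bigr => k _; rewrite mulr_sumr linear_sum.
apply: eq_bigr => l _; rewrite -scalerAl -scalerAr -exprD !linearZ /= pintXn !mxE.
by rewrite /GRing.scale /=; ring.
Qed.

Lemma hilbert_unit n : hilbert n \in unitmx.
Proof.
rewrite -row_free_unit -kermx_eq0; apply/rowV0P => u /sub_kermxP uH0.
have : pint (rVpoly u ^+ 2) = 0 by rewrite pint_rVpolyM uH0 mul0mx mxE.
by move/pint_sqr_eq0/(congr1 (@poly_rV _ n)); rewrite rVpolyK linear0.
Qed.

Definition coefnorm q : R := \sum_(k < size q) `|q`_k|.

Lemma coefnorm_ge0 q : 0 <= coefnorm q.
Proof. by apply: sumr_ge0 => k _; apply: normr_ge0. Qed.

Lemma coefnorm_widen n q : (size q <= n)%N -> coefnorm q = \sum_(k < n) `|q`_k|.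
Proof.
move=> qn; rewrite /coefnorm (big_ord_widen _ (fun k => `|q`_k|) qn) big_mkcond /=.
by apply: eq_bigr => k _; case: ltnP => // /(nth_default 0) ->; rewrite normr0.
Qed.

Lemma L2poly_le_coefnorm q : L2poly q <= coefnorm q.
Proof.
rewrite L2polyE -(ger0_norm (coefnorm_ge0 q)) -sqrtr_sqr ler_wsqrtr //.
set c : 'rV_(size q) := poly_rV q.
have -> : q ^+ 2 = rVpoly c * rVpoly c by rewrite poly_rV_K.
have -> : coefnorm q = \sum_k `|c 0 k| by apply: eq_bigr => k _; rewrite mxE.
rewrite pint_rVpolyM expr2 mulr_suml mxE; apply: ler_sum => l _.
rewrite mxE mulr_suml mulr_sumr; apply: ler_sum => k _; rewrite !mxE.
apply: le_trans (ler_norm _) _; rewrite !normrM mulrAC [X in _ <= X]mulrC.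
by rewrite ler_piMr ?mulr_ge0 // ger0_norm ?invr_ge0 // invf_le1 ?ltr0Sn // ler1n.
Qed.

(* The coefficients are recovered from the moments [pint (q * 'X^l)] through
   the inverse Hilbert matrix, and each moment is at most [L2poly q]. *)
Lemma coefnorm_le_L2poly n : exists2 B, 0 <= B &
  forall q, (size q <= n)%N -> coefnorm q <= B * L2poly q.
Proof.
set Hi := invmx (hilbert n).
exists (\sum_(k < n) \sum_(l < n) `|Hi l k|).
  by apply: sumr_ge0 => k _; apply: sumr_ge0 => l _; apply: normr_ge0.
move=> q qn; rewrite L2polyE; set s := Num.sqrt (pint (q ^+ 2)); set c : 'rV_n := poly_rV q.
have moment l : `|(c *m hilbert n) 0 l| <= s.
  have -> : (c *m hilbert n) 0 l = pint (q * 'X^l).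
    by rewrite -rVpoly_delta -{1}[q](poly_rV_K qn) pint_rVpolyM trmx_delta -colE !mxE.
  rewrite -sqrtr_sqr ler_wsqrtr //; apply: le_trans (pint_Cauchy_Schwarz _ _) _.
  by rewrite -exprM pintXn ler_piMr ?pint_sqr_ge0 // invf_le1 ?ltr0Sn // ler1n.
rewrite (coefnorm_widen qn) mulr_suml; apply: ler_sum => k _.
have -> : q`_k = c 0 k by rewrite mxE.
rewrite mulr_suml -(mulmxK (hilbert_unit n) c) -/Hi mxE.
apply: le_trans (ler_norm_sum _ _ _) _; apply: ler_sum => l _.
by rewrite normrM mulrC ler_wpM2l.
Qed.

Lemma coefnorm_deriv q : coefnorm q^`() <= (size q)%:R * coefnorm q.
Proof.
have size_q' : (size q^`() <= size q)%N.
  by have [->|/lt_size_deriv/ltnW] := eqVneq q 0; rewrite ?deriv0.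
rewrite (coefnorm_widen size_q') (coefnorm_widen (leqnSn (size q))) big_ord_recl.
apply: (@le_trans _ _ ((size q)%:R * \sum_(k < size q) `|q`_k.+1|)).
  rewrite mulr_sumr; apply: ler_sum => k _.
  by rewrite coef_deriv normrMn -[_ *+ _]mulr_natl ler_wpM2r // ler_nat.
by apply: ler_wpM2l => //; rewrite lerDr.
Qed.

Lemma L2poly_deriv_bound n : exists2 K, 0 <= K &
  forall q, (size q <= n)%N -> L2poly q^`() <= K * L2poly q.
Proof.
have [B B_ge0 hB] := coefnorm_le_L2poly n.
exists (n%:R * B) => [|q qn]; first exact: mulr_ge0.
rewrite -mulrA; apply: le_trans (L2poly_le_coefnorm _) _.
apply: le_trans (coefnorm_deriv q) _.
by apply: ler_pM; rewrite ?coefnorm_ge0 ?ler_nat ?hB.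
Qed.

End PolyIntegral.

Section InverseInequalityConstant.
Variables (R : realType) (p : nat).
Implicit Type q : {poly R}.

Let admissible := [set C : R | 0 <= C /\
  forall v : {poly R}, (size v <= p.+1)%N -> L2poly v^`() <= C * L2poly v].

(* Without this, [Cp1] would be the junk value [inf set0 = 0]. *)
Let admissible_neq0 : admissible !=set0.
Proof.
have [K K_ge0 hK] := L2poly_deriv_bound R p.+1.
by exists K.
Qed.

Let admissible_lb0 : lbound admissible 0.
Proof. by move=> C []. Qed.

Lemma Cp1_ge0 : 0 <= Cp1 R p.
Proof. exact: lb_le_inf admissible_neq0 admissible_lb0. Qed.

Lemma L2poly_deriv_le q : (size q <= p.+1)%N -> L2poly q^`() <= Cp1 R p * L2poly q.
Proof.
move=> qp; have [C [_ hC]] := admissible_neq0.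
have [Lq0|Lq_neq0] := eqVneq (L2poly q) 0.
  by have := hC q qp; rewrite Lq0 !mulr0.
have Lq_gt0 : 0 < L2poly q by rewrite lt_def Lq_neq0 L2polyE sqrtr_ge0.
rewrite -ler_pdivrMr //; apply: lb_le_inf admissible_neq0 _ => C' [_ hC'].
by rewrite ler_pdivrMr // hC'.
Qed.

Lemma pint_deriv_sqr_le q : (size q <= p.+1)%N ->
  pint (q^`() ^+ 2) <= Cp1 R p ^+ 2 * pint (q ^+ 2).
Proof.
move=> /L2poly_deriv_le; rewrite !L2polyE -ler_sqr ?nnegrE ?mulr_ge0 ?Cp1_ge0 ?sqrtr_ge0 //.
by rewrite exprMn !sqr_sqrtr ?pint_sqr_ge0.
Qed.

End InverseInequalityConstant.

Section CubePolynomials.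
Variables (R : realType) (d : nat).

(* A polynomial in d variables is encoded as a list of (coefficient, exponent)
   terms; [polyfun s] is the function it denotes. *)
Local Notation terms := (seq (R * ('I_d -> nat))).
Implicit Types (s : terms) (x y z : 'rV[R]_d) (t : R).

Definition terms_eval (F : ('I_d -> nat) -> R) s := \sum_(m <- s) m.1 * F m.2.

Definition terms_scale (a : R) s : terms := [seq (a * m.1, m.2) | m <- s].

Lemma terms_eval_cat F s1 s2 : terms_eval F (s1 ++ s2) = terms_eval F s1 + terms_eval F s2.
Proof. exact: big_cat. Qed.

Lemma terms_eval_scale F a s : terms_eval F (terms_scale a s) = a * terms_eval F s.
Proof. by rewrite /terms_eval big_map mulr_sumr; apply: eq_bigr => m _; rewrite mulrA. Qed.

Definition mono (e : 'I_d -> nat) x := \prod_(j < d) x ord0 j ^+ e j.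

Definition polyfun s x := terms_eval (mono^~ x) s.

Definition terms_mul s1 s2 : terms :=
  [seq (m1.1 * m2.1, fun j => (m1.2 j + m2.2 j)%N) | m1 <- s1, m2 <- s2].

Lemma polyfunM s1 s2 x : polyfun (terms_mul s1 s2) x = polyfun s1 x * polyfun s2 x.
Proof.
rewrite /polyfun /terms_eval big_allpairs_dep mulr_suml; apply: eq_bigr => m1 _.
rewrite mulr_sumr; apply: eq_bigr => m2 _ /=.
have -> : mono (fun j => (m1.2 j + m2.2 j)%N) x = mono m1.2 x * mono m2.2 x.
  by rewrite -big_split; apply: eq_bigr => j _; rewrite exprD.
by rewrite mulrACA.
Qed.

Lemma setcE x k t j : setc x k t ord0 j = if (j : nat) == k then t else x ord0 j.
Proof. by rewrite mxE. Qed.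

Lemma setc_out x k t : (d <= k)%N -> setc x k t = x.
Proof. by move=> dk; apply/rowP => j; rewrite setcE ltn_eqF // (leq_trans (ltn_ord j) dk). Qed.

(* Closed form of [iint k (polyfun s) x]. *)
Definition iint_terms (k : nat) s x := terms_eval (fun e =>
  \prod_(j < d) (if (j < k)%N then (e j).+1%:R^-1 else x ord0 j ^+ e j)) s.

Lemma int01_iint_terms_setc k s x :
  int01 (fun t => iint_terms k s (setc x k t)) = iint_terms k.+1 s x.
Proof.
have [kd|dk] := ltnP k d; last first.
  under eq_fun do rewrite setc_out //.
  rewrite int01_cst; apply: eq_bigr => m _; congr (_ * _); apply: eq_bigr => j _.
  by rewrite (leq_trans (ltn_ord j) dk) (leq_trans (ltn_ord j) (leqW dk)).
set K : 'I_d := Ordinal kd.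
have -> : (fun t => iint_terms k s (setc x k t)) = (fun t => \sum_(m <- s)
    (m.1 * \prod_(j | j != K) (if (j < k)%N then (m.2 j).+1%:R^-1 else x ord0 j ^+ m.2 j))
    * t ^+ m.2 K).
  apply/funext => t; apply: eq_bigr => m _; rewrite (bigD1 K) //= ltnn setcE eqxx.
  rewrite mulrA mulrAC; congr (_ * _ * _); apply: eq_bigr => j jK.
  by rewrite setcE (negPf (jK : (j : nat) != k)).
rewrite int01_sum_pow; apply: eq_bigr => m _; rewrite [in RHS](bigD1 K) //= ltnSn.
have -> : \prod_(j | j != K) (if (j < k.+1)%N then (m.2 j).+1%:R^-1 else x ord0 j ^+ m.2 j) =
          \prod_(j | j != K) (if (j < k)%N then (m.2 j).+1%:R^-1 else x ord0 j ^+ m.2 j).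
  by apply: eq_bigr => j jK; rewrite ltnS leq_eqVlt (negPf (jK : (j : nat) != k)).
by rewrite [RHS]mulrA [RHS]mulrAC.
Qed.

Lemma iint_polyfun k s x : iint k (polyfun s) x = iint_terms k s x.
Proof.
elim: k x => [|k IH] x /=; first by apply: eq_bigr => m _; congr (_ * _); apply: eq_bigr.
by under eq_fun do rewrite IH; apply: int01_iint_terms_setc.
Qed.

Lemma iint_ge0 (f : 'rV[R]_d -> R) k m y :
  (forall z, 0 <= iint k f z) -> 0 <= iint (k + m) f y.
Proof.
move=> f_ge0; elim: m y => [|m IH] y; first by rewrite addn0.
by rewrite addnS; apply: int01_ge0 => t _; apply: IH.
Qed.

Section Coordinate.
Variable i : 'I_d.

Lemma setc_id x : setc x i (x ord0 i) = x.
Proof. by apply/rowP => j; rewrite setcE val_eqE; case: eqP => [->|]; rewrite ?[ord0]ord1. Qed.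

Lemma mono_setc e z t : mono e (setc z i t) = t ^+ e i * \prod_(j | j != i) z ord0 j ^+ e j.
Proof.
rewrite /mono (bigD1 i) //= setcE eqxx; congr (_ * _).
by apply: eq_bigr => j /negPf ji; rewrite setcE val_eqE ji.
Qed.

Definition slice s z : {poly R} :=
  \sum_(m <- s) (m.1 * \prod_(j | j != i) z ord0 j ^+ m.2 j) *: 'X^(m.2 i).

Lemma polyfun_setc s z t : polyfun s (setc z i t) = (slice s z).[t].
Proof.
rewrite /polyfun /terms_eval /slice horner_sum; apply: eq_bigr => m _.
by rewrite hornerZ hornerXn mono_setc mulrA mulrAC.
Qed.

Lemma size_slice p s z : (forall m, m \in s -> (m.2 i <= p)%N) -> (size (slice s z) <= p.+1)%N.
Proof.
move=> deg_s; rewrite /slice big_seq.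
apply: (big_ind (fun q : {poly R} => (size q <= p.+1)%N)) => [|q r qp rp|m sm].
- by rewrite size_poly0.
- by apply: leq_trans (size_polyD _ _) _; rewrite geq_max qp rp.
- by apply: leq_trans (size_scale_leq _ _) _; rewrite size_polyXn ltnS deg_s.
Qed.

Definition terms_deriv s : terms :=
  [seq (m.1 * (m.2 i)%:R, fun j => if j == i then (m.2 i).-1 else m.2 j) | m <- s].

Lemma slice_deriv s z : (slice s z)^`() = slice (terms_deriv s) z.
Proof.
rewrite /slice raddf_sum big_map; apply: eq_bigr => m _ /=.
rewrite derivZ derivXn eqxx -scaler_nat scalerA.
have -> : \prod_(j | j != i) z ord0 j ^+ (if j == i then (m.2 i).-1 else m.2 j) =
          \prod_(j | j != i) z ord0 j ^+ m.2 j by apply: eq_bigr => j /negPf ->.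
by rewrite mulrAC.
Qed.

Lemma partial_polyfun s z : partial i (polyfun s) z = polyfun (terms_deriv s) z.
Proof.
rewrite /partial.
have -> : (fun t => polyfun s (setc z i t)) = horner (slice s z).
  by apply/funext => t; rewrite polyfun_setc.
by rewrite -derivE slice_deriv -polyfun_setc setc_id.
Qed.

Definition terms_int s : terms :=
  [seq (m.1 / (m.2 i).+1%:R, fun j => if j == i then 0%N else m.2 j) | m <- s].

Lemma int01_polyfun_setc s z :
  int01 (fun t => polyfun s (setc z i t)) = polyfun (terms_int s) z.
Proof.
have -> : (fun t => polyfun s (setc z i t)) = (fun t =>
    \sum_(m <- s) (m.1 * \prod_(j | j != i) z ord0 j ^+ m.2 j) * t ^+ m.2 i).
  by apply/funext => t; apply: eq_bigr => m _; rewrite mono_setc mulrA mulrAC.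
rewrite int01_sum_pow /polyfun /terms_eval big_map; apply: eq_bigr => m _ /=.
rewrite /mono [in RHS](bigD1 i) //= eqxx expr0 mul1r.
have -> : \prod_(j | j != i) z ord0 j ^+ (if j == i then 0%N else m.2 j) =
          \prod_(j | j != i) z ord0 j ^+ m.2 j by apply: eq_bigr => j /negPf ->.
by rewrite mulrAC.
Qed.

(* Fubini for polynomials: coordinate i may be integrated first. *)
Lemma iint_terms_int s y : iint_terms i.+1 s y = iint_terms i (terms_int s) y.
Proof.
rewrite /iint_terms /terms_eval big_map; apply: eq_bigr => m _ /=.
rewrite (bigD1 i) //= ltnSn [in RHS](bigD1 i) //= ltnn eqxx expr0 mul1r.
have -> : \prod_(j | j != i) (if (j < i.+1)%N then (m.2 j).+1%:R^-1 else y ord0 j ^+ m.2 j) =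
  \prod_(j | j != i) (if (j < i)%N then (if j == i then 0%N else m.2 j).+1%:R^-1
                      else y ord0 j ^+ (if j == i then 0%N else m.2 j)).
  by apply: eq_bigr => j /negPf ji; rewrite ltnS leq_eqVlt val_eqE ji.
by rewrite mulrA.
Qed.

Lemma iint_polyfun_ge0 s :
  (forall z, 0 <= int01 (fun t => polyfun s (setc z i t))) -> 0 <= iint d (polyfun s) 0.
Proof.
move=> slice_ge0; have := @iint_ge0 (polyfun s) i.+1 (d - i.+1) 0.
rewrite subnKC //; apply=> z; rewrite iint_polyfun iint_terms_int -iint_polyfun.
rewrite -(add0n i); apply: iint_ge0 => y.
by rewrite /= -int01_polyfun_setc.
Qed.

Lemma iint_partial_sqr_le p s : (forall m, m \in s -> (m.2 i <= p)%N) ->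
  iint d (fun x => partial i (polyfun s) x ^+ 2) 0 <=
  Cp1 R p ^+ 2 * iint d (fun x => polyfun s x ^+ 2) 0.
Proof.
move=> deg_s; set C2 := Cp1 R p ^+ 2.
set sv2 := terms_mul s s; set sd2 := terms_mul (terms_deriv s) (terms_deriv s).
have sq_v : (fun x => polyfun s x ^+ 2) = polyfun sv2.
  by apply/funext => x; rewrite polyfunM expr2.
have sq_d : (fun x => partial i (polyfun s) x ^+ 2) = polyfun sd2.
  by apply/funext => x; rewrite polyfunM partial_polyfun expr2.
set sD := terms_scale C2 sv2 ++ terms_scale (-1) sd2.
have polyfun_sD x : polyfun sD x = C2 * polyfun sv2 x - polyfun sd2 x.
  by rewrite /polyfun terms_eval_cat !terms_eval_scale mulN1r.
have iint_sD : iint d (polyfun sD) 0 = C2 * iint d (polyfun sv2) 0 - iint d (polyfun sd2) 0.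
  by rewrite !iint_polyfun /iint_terms terms_eval_cat !terms_eval_scale mulN1r.
rewrite sq_v sq_d -subr_ge0 -iint_sD; apply: iint_polyfun_ge0 => z.
set Q := slice s z.
have -> : (fun t => polyfun sD (setc z i t)) = horner (C2 *: Q ^+ 2 - Q^`() ^+ 2).
  apply/funext => t; rewrite polyfun_sD -sq_v -sq_d /= partial_polyfun !polyfun_setc.
  by rewrite -slice_deriv hornerD hornerN hornerZ !horner_exp.
rewrite int01_horner linearB linearZ /= subr_ge0.
exact/pint_deriv_sqr_le/size_slice.
Qed.

End Coordinate.

End CubePolynomials.

Theorem lemmaA1 (R : realType) (d p : nat) : (1 <= d)%N ->
  forall v : 'rV[R]_d -> R, is_poly_tdeg p v ->
  forall i : 'I_d, L2cube (partial i v) <= Cp1 R p * L2cube v.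
Proof.
move=> _ v [c v_def] i.
set s := [seq (c a, fun j => (a j : nat)) |
  a <- enum [pred a : {ffun 'I_d -> 'I_p.+1} | (\sum_(j < d) (a j : nat) <= p)%N]].
have -> : v = polyfun s.
  by apply/funext => x; rewrite v_def /polyfun /terms_eval big_map big_enum.
have deg_s m : m \in s -> (m.2 i <= p)%N.
  by case/mapP => a _ ->; rewrite -ltnS ltn_ord.
rewrite /L2cube -(ger0_norm (Cp1_ge0 R p)) -sqrtr_sqr -sqrtrM ?sqr_ge0 //.
exact/ler_wsqrtr/iint_partial_sqr_le.
Qed.
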